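(* For a fixed discrete memoryless MAC $p(y|x_1,x_2)$, define for $C_1,C_2\ge 0$ $$f_\ell(C_1,C_2)=\max_{p(u,x_1,x_2)}\min\left\{\begin{array}{l} C_1+C_2-I(X_1;X_2|U),\\ C_2+I(X_1;Y|X_2U),\\ C_1+I(X_2;Y|X_1U),\\ \tfrac12\big(C_1+C_2+I(X_1X_2;Y|U)-I(X_1;X_2|U)\big),\\ I(X_1X_2;Y)\end{array}\right\},$$ where the maximum is over pmfs $p(u,x_1,x_2)$ on $\mathcal U\times\mathcal X_1\times\mathcal X_2$ with $U$ taking values in a finite set with $|\mathcal{U}|\le \min\{|\mathcal{X}_1||\mathcal{X}_2|+3,|\mathcal{Y}|+4\}$, and the information quantities are evaluated for $p(u,x_1,x_2)p(y|x_1,x_2)$. Then $f_\ell$ is concave in $(C_1,C_2)$.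
   Context: $f_\ell(C_1,C_2)$ is the achievable rate (lower bound on capacity) of a two-relay diamond network whose broadcast part consists of two orthogonal error-free bit-pipes of capacities $C_1,C_2$ and whose second hop is the MAC $p(y|x_1,x_2)$ with finite alphabets $\mathcal X_1,\mathcal X_2,\mathcal Y$. Logarithms are base 2. *)

From Stdlib Require Import Reals ClassicalEpsilon.
From mathcomp Require Import all_boot.
Set Implicit Arguments. Unset Strict Implicit. Unset Printing Implicit Defensive.
Local Open Scope R_scope.

Definition log2 (x : R) : R := ln x / ln 2.
(* x log2 x with the convention 0 log 0 = 0 *)
Definition nlogn (x : R) : R := if Rlt_dec 0 x then x * log2 x else 0.

Definition rsum (T : finType) (f : T -> R) : R := \big[Rplus/0]_(t : T) f t.

(* entropy H(g(T)) of the random variable g : T -> S, where T has pmf P *)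
Definition ent (T S : finType) (P : T -> R) (g : T -> S) : R :=
  - rsum (fun s : S => nlogn (rsum (fun t : T => if g t == s then P t else 0))).

Definition cmi (T A B C : finType) (P : T -> R)
    (a : T -> A) (b : T -> B) (c : T -> C) : R :=
  ent P (fun t => (a t, c t)) + ent P (fun t => (b t, c t))
  - ent P (fun t => (a t, b t, c t)) - ent P c.

Definition is_channel (X1 X2 Y : finType) (W : X1 -> X2 -> Y -> R) : Prop :=
  (forall x1 x2 y, 0 <= W x1 x2 y) /\ (forall x1 x2, rsum (W x1 x2) = 1).

Definition is_pmf3 (U X1 X2 : finType) (p : U -> X1 -> X2 -> R) : Prop :=
  (forall u x1 x2, 0 <= p u x1 x2) /\
  rsum (fun t : (U * X1 * X2)%type => p t.1.1 t.1.2 t.2) = 1.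

Definition joint (U X1 X2 Y : finType) (p : U -> X1 -> X2 -> R)
    (W : X1 -> X2 -> Y -> R) (t : (U * X1 * X2 * Y)%type) : R :=
  p t.1.1.1 t.1.1.2 t.1.2 * W t.1.1.2 t.1.2 t.2.

Definition fl_objective (U X1 X2 Y : finType) (W : X1 -> X2 -> Y -> R)
    (p : U -> X1 -> X2 -> R) (C1 C2 : R) : R :=
  let P := joint p W in
  let u  := fun t : (U * X1 * X2 * Y)%type => t.1.1.1 in
  let x1 := fun t : (U * X1 * X2 * Y)%type => t.1.1.2 in
  let x2 := fun t : (U * X1 * X2 * Y)%type => t.1.2 in
  let y  := fun t : (U * X1 * X2 * Y)%type => t.2 in
  let x12 := fun t => (x1 t, x2 t) in
  let none := fun _ : (U * X1 * X2 * Y)%type => tt in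
  Rmin (C1 + C2 - cmi P x1 x2 u)
  (Rmin (C2 + cmi P x1 y (fun t => (x2 t, u t)))
  (Rmin (C1 + cmi P x2 y (fun t => (x1 t, u t)))
  (Rmin ((C1 + C2 + cmi P x12 y u - cmi P x1 x2 u) / 2)
        (cmi P x12 y none)))).

Definition fl_values (X1 X2 Y : finType) (W : X1 -> X2 -> Y -> R) (C1 C2 : R)
    : R -> Prop :=
  fun v => exists k : nat,
    (k <= minn (#|X1| * #|X2| + 3) (#|Y| + 4))%N /\
    exists p : 'I_k -> X1 -> X2 -> R, is_pmf3 p /\ v = fl_objective W p C1 C2.

(* supremum (classically chosen least upper bound) of a set of reals;
   for f_l this supremum is attained, i.e. it is the max of the paper *)
Definition Rsup (E : R -> Prop) : R := epsilon (inhabits 0) (fun l => is_lub E l).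

Definition f_l (X1 X2 Y : finType) (W : X1 -> X2 -> Y -> R) (C1 C2 : R) : R :=
  Rsup (fl_values W C1 C2).

(* Write a pmf p(u,x1,x2) as the family of unnormalized laws m_u = p(u,.,.) on X1 x X2.
   The conditional informations given U are then sums over u of functions that are
   homogeneous of degree one in m_u, and I(X1X2;Y) is a concave function of the
   marginal sum_u m_u.  Hence time sharing, i.e. concatenating the families lam p and
   (1-lam) q, gives a pmf whose objective at the averaged capacities is at least the
   average of the two objectives.  The concatenated family may violate the bound on
   |U|; a Caratheodory argument removes components one by one: with too many
   components some nonzero direction d annihilates I(X1;X2), I(X1;Y|X2), I(X2;Y|X1)
   of the components together with the linear data fixing I(X1X2;Y) of the marginal
   (the marginal itself, or the output law and H(Y|X1X2)), and moving along d or -d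
   until a weight vanishes cannot decrease the objective.  Since all values are
   bounded by |Y| / ln 2, the suprema exist and the inequality passes to them. *)

From Stdlib Require Import Reals Lra Classical ClassicalEpsilon.
From Stdlib Require Import FunctionalExtensionality PropExtensionality.
From mathcomp Require Import all_boot all_order all_algebra.
From mathcomp Require Import Rstruct.
Set Implicit Arguments. Unset Strict Implicit. Unset Printing Implicit Defensive.
Local Open Scope R_scope.

Lemma ln_le_sub1 x : 0 < x -> ln x <= x - 1.
Proof. by move=> x_gt0; have := exp_ineq1_le (ln x); rewrite exp_ln //; lra. Qed.

Lemma ln2_gt0 : 0 < ln 2.
Proof. by have := ln_lt_2; lra. Qed.

Lemma nlogn0 : nlogn 0 = 0.
Proof. by rewrite /nlogn; case: Rlt_dec => //=; lra. Qed.

Lemma nlognE x : 0 < x -> nlogn x = x * ln x / ln 2.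
Proof. by rewrite /nlogn /log2 /Rdiv Rmult_assoc; case: Rlt_dec. Qed.

Lemma nlogn1 : nlogn 1 = 0.
Proof. by rewrite nlognE ?ln_1; lra. Qed.

Lemma nlognM c x : 0 <= c -> 0 <= x -> nlogn (c * x) = c * nlogn x + x * nlogn c.
Proof.
move=> c_ge0 x_ge0.
have [->|c_neq0] := Req_dec c 0; first by rewrite Rmult_0_l nlogn0; lra.
have [->|x_neq0] := Req_dec x 0; first by rewrite Rmult_0_r nlogn0; lra.
have c_gt0 : 0 < c by lra.
have x_gt0 : 0 < x by lra.
rewrite !nlognE ?ln_mult //; last exact: Rmult_lt_0_compat.
by field; apply: Rgt_not_eq ln2_gt0.
Qed.

Lemma nlogn_tangent m x : 0 < m -> 0 <= x ->
  nlogn m + (ln m + 1) / ln 2 * (x - m) <= nlogn x.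
Proof.
move=> m_gt0 x_ge0; have ln2_pos := ln2_gt0.
apply: (Rmult_le_reg_r (ln 2)) => //.
have -> : (nlogn m + (ln m + 1) / ln 2 * (x - m)) * ln 2 =
          m * ln m + (ln m + 1) * (x - m) by rewrite nlognE //; field; lra.
have [->|x_gt0] : x = 0 \/ 0 < x by lra.
  by rewrite nlogn0; nra.
rewrite nlognE //.
have -> : x * ln x / ln 2 * ln 2 = x * ln x by field; lra.
(* ln (m / x) <= m / x - 1, multiplied by x *)
have := ln_le_sub1 (Rdiv_lt_0_compat _ _ m_gt0 x_gt0).
rewrite /Rdiv ln_mult ?ln_Rinv //; last exact: Rinv_0_lt_compat.
move=> ln_le.
have : x * (ln m + - ln x) <= x * (m * / x - 1) by apply: Rmult_le_compat_l; lra.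
have -> : x * (m * / x - 1) = m - x by field; lra.
nra.
Qed.

Lemma nlogn_convex l a b : 0 <= l <= 1 -> 0 <= a -> 0 <= b ->
  nlogn (l * a + (1 - l) * b) <= l * nlogn a + (1 - l) * nlogn b.
Proof.
move=> l01 a_ge0 b_ge0.
have la_ge0 : 0 <= l * a by apply: Rmult_le_pos; lra.
have lb_ge0 : 0 <= (1 - l) * b by apply: Rmult_le_pos; lra.
have [m_eq0|m_gt0] : l * a + (1 - l) * b = 0 \/ 0 < l * a + (1 - l) * b by lra.
  have nlogn_weight w z : w * z = 0 -> w * nlogn z = 0.
    by case/Rmult_integral => ->; rewrite ?nlogn0; ring.
  rewrite m_eq0 nlogn0 !nlogn_weight; lra.
have Ta := nlogn_tangent m_gt0 a_ge0; have Tb := nlogn_tangent m_gt0 b_ge0.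
nra.
Qed.

Lemma nlogn_ge x : 0 <= x -> - / ln 2 <= nlogn x.
Proof.
move=> x_ge0; have := nlogn_tangent (Rlt_0_1) x_ge0.
have -> : nlogn 1 + (ln 1 + 1) / ln 2 * (x - 1) = / ln 2 * x - / ln 2.
  by rewrite nlogn1 ln_1; field; apply: Rgt_not_eq ln2_gt0.
have : 0 <= / ln 2 * x by apply: Rmult_le_pos; [apply/Rlt_le/Rinv_0_lt_compat/ln2_gt0|].
lra.
Qed.

Lemma nlogn_le0 x : 0 <= x <= 1 -> nlogn x <= 0.
Proof.
move=> x01; have [->|x_gt0] : x = 0 \/ 0 < x by lra.
  by rewrite nlogn0; lra.
rewrite nlognE //; have := ln_le_sub1 x_gt0; have := ln2_gt0.
move=> ln2_pos ln_le; have := Rinv_0_lt_compat _ ln2_pos.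
have : x * ln x <= 0 by nra.
rewrite /Rdiv; nra.
Qed.

Lemma Rmin_le_compat a b a' b' : a <= a' -> b <= b' -> Rmin a b <= Rmin a' b'.
Proof.
by move=> aa' bb'; apply: Rle_trans (Rle_min_compat_r _ _ _ aa') (Rle_min_compat_l _ _ _ bb').
Qed.

Lemma Rmin_comb l a b a' b' : 0 <= l <= 1 ->
  l * Rmin a b + (1 - l) * Rmin a' b' <= Rmin (l * a + (1 - l) * a') (l * b + (1 - l) * b').
Proof.
move=> l01; have := Rmin_l a b; have := Rmin_r a b; have := Rmin_l a' b'; have := Rmin_r a' b'.
by move=> *; apply: Rmin_glb; nra.
Qed.

Section FiniteSums.
Variable T : finType.
Implicit Types F G : T -> R.

Lemma eq_rsum F G : (forall t, F t = G t) -> rsum F = rsum G.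
Proof. by move=> FG; apply: eq_bigr => t _; apply: FG. Qed.

Lemma rsumD F G : rsum (fun t => F t + G t) = rsum F + rsum G.
Proof. exact: big_split. Qed.

Lemma rsum_distrr c F : rsum (fun t => c * F t) = c * rsum F.
Proof. by rewrite /rsum big_distrr. Qed.

Lemma rsum_distrl c F : rsum (fun t => F t * c) = rsum F * c.
Proof. by rewrite /rsum big_distrl. Qed.

Lemma rsumN F : rsum (fun t => - F t) = - rsum F.
Proof. by apply: esym; apply: (big_morph Ropp) => [x y|]; ring. Qed.

Lemma rsumB F G : rsum (fun t => F t - G t) = rsum F - rsum G.
Proof. by rewrite rsumD rsumN. Qed.

Lemma rsum_eq0 F : (forall t, F t = 0) -> rsum F = 0.
Proof. by move=> F0; apply: big1 => t _; apply: F0. Qed.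

Lemma ler_rsum F G : (forall t, F t <= G t) -> rsum F <= rsum G.
Proof.
by move=> FG; apply: (big_ind2 (fun x y => x <= y)) => [|x1 x2 y1 y2|t _]; try lra.
Qed.

Lemma rsum_ge0 F : (forall t, 0 <= F t) -> 0 <= rsum F.
Proof. by move=> F_ge0; rewrite -(rsum_eq0 (fun _ => erefl 0)); apply: ler_rsum. Qed.

Lemma rsum_pred1 t0 F : rsum (fun t => if t == t0 then F t else 0) = F t0.
Proof. by rewrite /rsum -big_mkcond big_pred1_eq. Qed.

Lemma rsum_pred1r t0 F : rsum (fun t => if t0 == t then F t else 0) = F t0.
Proof. by rewrite -(rsum_pred1 t0); apply: eq_rsum => t; rewrite eq_sym. Qed.

Lemma rsum_ge_term F t0 : (forall t, 0 <= F t) -> F t0 <= rsum F.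
Proof.
move=> F_ge0; rewrite /rsum (bigD1 t0) //=.
suff : 0 <= \big[Rplus/0]_(t | t != t0) F t by lra.
by apply: (big_ind (fun x => 0 <= x)) => [|x y|t _]; try lra.
Qed.

End FiniteSums.

Lemma exchange_rsum (A B : finType) (F : A -> B -> R) :
  rsum (fun a => rsum (F a)) = rsum (fun b => rsum (F^~ b)).
Proof. exact: exchange_big. Qed.

Lemma pair_rsum (A B : finType) (F : A * B -> R) :
  rsum F = rsum (fun a => rsum (fun b => F (a, b))).
Proof. by rewrite /rsum pair_big; apply: eq_bigr => -[]. Qed.

Lemma rsum_unit (F : unit -> R) : rsum F = F tt.
Proof. by rewrite -(rsum_pred1 tt); apply: eq_rsum => -[]. Qed.

Lemma rsum_split_ord n1 n2 (F : 'I_(n1 + n2) -> R) :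
  rsum F = rsum (fun i => F (lshift n2 i)) + rsum (fun j => F (rshift n1 j)).
Proof. exact: big_split_ord. Qed.

Lemma rsum_D1_ord n (F : 'I_n.+1 -> R) i0 :
  rsum F = F i0 + rsum (fun j => F (lift i0 j)).
Proof. exact: bigD1_ord. Qed.

Definition push (T S : finType) (P : T -> R) (g : T -> S) (s : S) : R :=
  rsum (fun t => if g t == s then P t else 0).

Definition restr (T U : finType) (P : T -> R) (u : T -> U) (u0 : U) (t : T) : R :=
  if u t == u0 then P t else 0.

Lemma entE (T S : finType) (P : T -> R) (g : T -> S) :
  ent P g = - rsum (fun s => nlogn (push P g s)).
Proof. by []. Qed.

Section Entropy.
Variables (T : finType) (P : T -> R).

Lemma push_ge0 (S : finType) (g : T -> S) s : (forall t, 0 <= P t) -> 0 <= push P g s.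
Proof. by move=> P_ge0; apply: rsum_ge0 => t; case: eqP => _ //; apply: Rle_refl. Qed.

Lemma rsum_push (S : finType) (g : T -> S) : rsum (push P g) = rsum P.
Proof. by rewrite /push exchange_rsum; apply: eq_rsum => t; rewrite rsum_pred1r. Qed.

Lemma push_comp (S S' : finType) (f : T -> S) (g : S -> S') s' :
  push P (fun t => g (f t)) s' = push (push P f) g s'.
Proof.
rewrite /push; transitivity (rsum (fun t => rsum (fun s =>
  if f t == s then (if g s == s' then P t else 0) else 0))).
  by apply: eq_rsum => t; rewrite rsum_pred1r.
rewrite exchange_rsum; apply: eq_rsum => s.
by case: eqP => _ //; apply: rsum_eq0 => t; case: eqP.
Qed.

Lemma ent_comp (S S' : finType) (f : T -> S) (g : S -> S') :
  ent P (fun t => g (f t)) = ent (push P f) g.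
Proof. by rewrite !entE; under eq_rsum => s do rewrite push_comp. Qed.

Lemma cmi_comp (S A B C : finType) (f : T -> S) (a : S -> A) (b : S -> B) (c : S -> C) :
  cmi P (fun t => a (f t)) (fun t => b (f t)) (fun t => c (f t)) = cmi (push P f) a b c.
Proof.
rewrite /cmi (ent_comp f (fun s => (a s, c s))) (ent_comp f (fun s => (b s, c s))).
by rewrite (ent_comp f (fun s => (a s, b s, c s))) (ent_comp f c).
Qed.

End Entropy.

Lemma ent_inj (S S' : finType) (Q : S -> R) (f : S -> S') :
  injective f -> ent Q f = - rsum (fun s => nlogn (Q s)).
Proof.
move=> f_inj.
have fiber s' (G : S -> R) : rsum (fun s => if f s == s' then G s else 0) =
    if [pick s | f s == s'] is Some s0 then G s0 else 0.
  case: pickP => [s0 /eqP <-|no_s]; last by apply: rsum_eq0 => s; rewrite no_s.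
  by under eq_rsum => s do rewrite (inj_eq f_inj); rewrite rsum_pred1.
rewrite entE /push; congr (- _).
transitivity (rsum (fun s' => rsum (fun s => if f s == s' then nlogn (Q s) else 0))).
  by apply: eq_rsum => s'; rewrite !fiber; case: pickP; rewrite ?nlogn0.
by rewrite exchange_rsum; apply: eq_rsum => s; rewrite rsum_pred1r.
Qed.

Lemma ent_comp_inj (T S S' : finType) (P : T -> R) (g : T -> S) (f : S -> S') :
  injective f -> ent P (fun t => f (g t)) = ent P g.
Proof. by move=> f_inj; rewrite ent_comp ent_inj. Qed.

Section Conditioning.
Variables (T : finType) (P : T -> R).

Lemma ent_pair_inj (A S S' : finType) (a : T -> A) (c : T -> S) (f : S -> S') :
  injective f -> ent P (fun t => (a t, f (c t))) = ent P (fun t => (a t, c t)).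
Proof.
move=> f_inj; apply: (ent_comp_inj P (fun t => (a t, c t)) (f := fun p => (p.1, f p.2))).
by move=> [x1 y1] [x2 y2] /= [-> /f_inj ->].
Qed.

Lemma ent_assoc (A S U : finType) (a : T -> A) (c : T -> S) (u : T -> U) :
  ent P (fun t => (a t, (c t, u t))) = ent P (fun t => ((a t, c t), u t)).
Proof.
apply: (ent_comp_inj P (fun t => ((a t, c t), u t)) (f := fun p => (p.1.1, (p.1.2, p.2)))).
by move=> [[x1 y1] z1] [[x2 y2] z2] /= [-> -> ->].
Qed.

Lemma ent_pair_cond (S U : finType) (g : T -> S) (u : T -> U) :
  ent P (fun t => (g t, u t)) = rsum (fun u0 => ent (restr P u u0) g).
Proof.
rewrite entE pair_rsum exchange_rsum.
under [RHS]eq_rsum => u0 do rewrite entE.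
rewrite rsumN; congr (- _); apply: eq_rsum => u0; apply: eq_rsum => s.
rewrite /push /restr; congr (nlogn _); apply: eq_rsum => t.
by rewrite xpair_eqE; case: (g t == s); case: (u t == u0).
Qed.

Lemma cmi_pair_cond (A B C U : finType) (a : T -> A) (b : T -> B) (c : T -> C) (u : T -> U) :
  cmi P a b (fun t => (c t, u t)) = rsum (fun u0 => cmi (restr P u u0) a b c).
Proof. by rewrite /cmi !ent_assoc !ent_pair_cond -rsumD -!rsumB. Qed.

Lemma cmi_cond_inj (A B C C' : finType) (a : T -> A) (b : T -> B) (c : T -> C) (f : C -> C') :
  injective f -> cmi P a b (fun t => f (c t)) = cmi P a b c.
Proof. by move=> f_inj; rewrite /cmi !(ent_pair_inj _ _ f_inj) (ent_comp_inj P c f_inj). Qed.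

End Conditioning.

Lemma entZ (T S : finType) (P : T -> R) (g : T -> S) c :
  (forall t, 0 <= P t) -> 0 <= c ->
  ent (fun t => c * P t) g = c * ent P g - nlogn c * rsum P.
Proof.
move=> P_ge0 c_ge0; rewrite !entE.
have pushZ s : push (fun t => c * P t) g s = c * push P g s.
  by rewrite /push -rsum_distrr; apply: eq_rsum => t; case: eqP => _; ring.
under eq_rsum => s do rewrite pushZ (nlognM c_ge0 (push_ge0 g s P_ge0)).
rewrite rsumD rsum_distrr rsum_distrl rsum_push; ring.
Qed.

Lemma cmiZ (T A B C : finType) (P : T -> R) (a : T -> A) (b : T -> B) (c : T -> C) k :
  (forall t, 0 <= P t) -> 0 <= k -> cmi (fun t => k * P t) a b c = k * cmi P a b c.
Proof. by move=> P_ge0 k_ge0; rewrite /cmi !entZ //; ring. Qed.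

Section Measures.
Variables X1 X2 : finType.
Implicit Types (M : X1 -> X2 -> R) (g : X1 * X2 -> R).

Definition nonneg M : Prop := forall x1 x2, 0 <= M x1 x2.

Definition expect M g : R := rsum (fun x => M x.1 x.2 * g x).

Definition mass M : R := expect M (fun _ => 1).

Definition scale (k : R) M : X1 -> X2 -> R := fun x1 x2 => k * M x1 x2.

Definition marg (U : finType) (m : U -> X1 -> X2 -> R) : X1 -> X2 -> R :=
  fun x1 x2 => rsum (fun u => m u x1 x2).

Lemma expect_scale k M g : expect (scale k M) g = k * expect M g.
Proof. by rewrite /expect -rsum_distrr; apply: eq_rsum => x; rewrite /scale Rmult_assoc. Qed.

Lemma expect_marg (U : finType) (m : U -> X1 -> X2 -> R) g :
  expect (marg m) g = rsum (fun u => expect (m u) g).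
Proof. by rewrite /expect exchange_rsum; apply: eq_rsum => x; rewrite rsum_distrl. Qed.

Lemma expect_comb l l' M M' g :
  expect (fun x1 x2 => l * M x1 x2 + l' * M' x1 x2) g = l * expect M g + l' * expect M' g.
Proof. by rewrite /expect -!rsum_distrr -rsumD; apply: eq_rsum => x; ring. Qed.

Lemma expect_ge0 M g : nonneg M -> (forall x, 0 <= g x) -> 0 <= expect M g.
Proof. by move=> M_ge0 g_ge0; apply: rsum_ge0 => x; apply: Rmult_le_pos. Qed.

Lemma scale_nonneg k M : 0 <= k -> nonneg M -> nonneg (scale k M).
Proof. by move=> k_ge0 M_ge0 x1 x2; apply: Rmult_le_pos. Qed.

Lemma marg_nonneg (U : finType) (m : U -> X1 -> X2 -> R) :
  (forall u, nonneg (m u)) -> nonneg (marg m).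
Proof. by move=> m_ge0 x1 x2; apply: rsum_ge0 => u; apply: m_ge0. Qed.

Lemma mass_marg (U : finType) (m : U -> X1 -> X2 -> R) :
  mass (marg m) = rsum (fun u => mass (m u)).
Proof. exact: expect_marg. Qed.

Lemma mass_eq0 M : nonneg M -> mass M = 0 -> forall x1 x2, M x1 x2 = 0.
Proof.
move=> M_ge0 M_mass x1 x2; apply: Rle_antisym; last exact: M_ge0.
rewrite -M_mass -[M x1 x2]Rmult_1_r.
by apply: (rsum_ge_term (F := fun x : X1 * X2 => M x.1 x.2 * 1) (x1, x2)) => x;
   rewrite Rmult_1_r.
Qed.

End Measures.

Lemma is_pmf3E (U X1 X2 : finType) (p : U -> X1 -> X2 -> R) :
  is_pmf3 p <-> (forall u, nonneg (p u)) /\ rsum (fun u => mass (p u)) = 1.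
Proof.
rewrite /is_pmf3; suff -> : rsum (fun t : U * X1 * X2 => p t.1.1 t.1.2 t.2) =
    rsum (fun u => mass (p u)) by [].
rewrite !pair_rsum; apply: eq_rsum => u; rewrite /mass /expect pair_rsum.
by apply: eq_rsum => x1; apply: eq_rsum => x2; rewrite Rmult_1_r.
Qed.

Lemma pmf3_drop (X1 X2 : finType) n (m : 'I_n.+1 -> X1 -> X2 -> R) i0 :
  (forall x1 x2, m i0 x1 x2 = 0) -> is_pmf3 m -> is_pmf3 (fun j => m (lift i0 j)).
Proof.
move=> m0 /is_pmf3E[m_ge0 m_mass]; apply/is_pmf3E; split => [j|]; first exact: m_ge0.
have mass0 : mass (m i0) = 0 by apply: rsum_eq0 => x; rewrite m0 Rmult_0_l.
by rewrite -m_mass (rsum_D1_ord _ i0) mass0 Rplus_0_l.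
Qed.

Section TimeSharing.
Variables (X1 X2 : finType) (k1 k2 : nat) (l : R).
Variables (p : 'I_k1 -> X1 -> X2 -> R) (q : 'I_k2 -> X1 -> X2 -> R).

Definition mix (i : 'I_(k1 + k2)) : X1 -> X2 -> R :=
  match split i with inl j => scale l (p j) | inr j => scale (1 - l) (q j) end.

Lemma rsum_mix (F : (X1 -> X2 -> R) -> R) :
  rsum (fun i => F (mix i)) =
  rsum (fun j => F (scale l (p j))) + rsum (fun j => F (scale (1 - l) (q j))).
Proof.
rewrite rsum_split_ord /mix; congr (_ + _); apply: eq_rsum => j.
- by rewrite (unsplitK (inl j)).
- by rewrite (unsplitK (inr j)).
Qed.

Lemma marg_mix : marg mix = fun x1 x2 => l * marg p x1 x2 + (1 - l) * marg q x1 x2.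
Proof.
apply: functional_extensionality => x1; apply: functional_extensionality => x2.
by rewrite /marg (rsum_mix (fun M => M x1 x2)) /scale !rsum_distrr.
Qed.

Lemma mix_pmf3 : 0 <= l <= 1 -> is_pmf3 p -> is_pmf3 q -> is_pmf3 mix.
Proof.
move=> l01 /is_pmf3E[p_ge0 p_mass] /is_pmf3E[q_ge0 q_mass]; apply/is_pmf3E; split.
  by move=> i; rewrite /mix; case: split => j; apply: scale_nonneg => //; lra.
rewrite (rsum_mix (@mass _ _)).
under eq_rsum => j do rewrite /mass expect_scale.
under [X in _ + X]eq_rsum => j do rewrite /mass expect_scale.
by rewrite !rsum_distrr -/mass p_mass q_mass; ring.
Qed.

End TimeSharing.

Section Directions.
Variable n : nat.
Implicit Types d v : 'I_n -> R.

Definition dot d v : R := rsum (fun i => d i * v i).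

Lemma rsum_reweight t d v : rsum (fun i => (1 + t * d i) * v i) = rsum v + t * dot d v.
Proof. by rewrite /dot -rsum_distrr -rsumD; apply: eq_rsum => i; ring. Qed.

Lemma dotN d v : dot (fun i => - d i) v = - dot d v.
Proof. by rewrite /dot -rsumN; apply: eq_rsum => i; ring. Qed.

Lemma dot_exchange (E : finType) d (v : 'I_n -> E -> R) :
  dot d (fun i => rsum (v i)) = rsum (fun e => dot d (v^~ e)).
Proof. by rewrite /dot -exchange_rsum; apply: eq_rsum => i; rewrite rsum_distrr. Qed.

Lemma dot_eq0_neg d v : (exists i, d i <> 0) -> (forall i, 0 < v i) -> dot d v = 0 ->
  exists i, d i < 0.
Proof.
move=> [j dj_neq0] v_gt0 dv0; apply: NNPP => no_neg.
have d_ge0 i : 0 <= d i by apply: Rnot_lt_le => di_lt0; apply: no_neg; exists i.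
have : d j * v j <= dot d v.
  apply: (rsum_ge_term (F := fun i => d i * v i) j) => i.
  by apply: Rmult_le_pos; [|apply: Rlt_le].
have dj_gt0 : 0 < d j by have := d_ge0 j; lra.
by have := Rmult_lt_0_compat _ _ dj_gt0 (v_gt0 j); lra.
Qed.

Lemma zeroing_weight d i : d i < 0 ->
  exists t i0, [/\ 0 <= t, forall j, 0 <= 1 + t * d j & 1 + t * d i0 = 0].
Proof.
move=> di_lt0; have [i0 _ i0_min] := @Order.TotalTheory.arg_minP _ R _ i xpredT d isT.
have {}i0_min j : d i0 <= d j by apply/RleP; apply: i0_min.
have di0_lt0 : d i0 < 0 by have := i0_min i; lra.
have inv_gt0 : 0 < - / d i0 by have := Rinv_lt_0_compat _ di0_lt0; lra.
exists (- / d i0), i0; split; first lra.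
- move=> j; have -> : 1 + - / d i0 * d j = (d j - d i0) * - / d i0 by field; lra.
  by apply: Rmult_le_pos; [have := i0_min j | ]; lra.
- by field; lra.
Qed.

Lemma kernel_exists (E : finType) (c : 'I_n -> E -> R) : (#|E| < n)%N ->
  exists d, (exists i, d i <> 0) /\ forall e, dot d (c^~ e) = 0.
Proof.
move=> card_lt.
pose A : 'M[R]_(n, #|E|) := (\matrix_(i, j) c i (enum_val j))%R.
have ker_neq0 : kermx A != 0%R.
  rewrite -mxrank_eq0 mxrank_ker subn_eq0 -ltnNge.
  exact: leq_ltn_trans (rank_leq_col A) card_lt.
have [i row_neq0] : exists i, row i (kermx A) != 0%R.
  apply/existsP; apply: contraT; rewrite negb_exists => /forallP row_eq0.
  move: ker_neq0; apply: contraNT => _; apply/eqP/row_matrixP => i.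
  by rewrite row0; apply/eqP/negPn/row_eq0.
pose v := row i (kermx A).
have vA : (v *m A)%R = 0%R by rewrite /v -row_mul mulmx_ker row0.
exists (fun j => v 0%R j); split.
- apply: NNPP => v_eq0; move/negP: row_neq0; apply; apply/eqP/rowP => j.
  by rewrite [RHS]mxE; apply: NNPP => vj_neq0; apply: v_eq0; exists j.
- move=> e; have := congr1 (fun B : 'M_(1, #|E|) => B 0%R (enum_rank e)) vA.
  rewrite /= !mxE => sum0; apply: etrans sum0; apply: eq_bigr => j _.
  by rewrite [X in (_ * X)%R]mxE enum_rankK.
Qed.

End Directions.

Section MAC.
Variables (X1 X2 Y : finType) (W : X1 -> X2 -> Y -> R).

Definition mac_dist (M : X1 -> X2 -> R) (t : X1 * X2 * Y) : R :=
  M t.1.1 t.1.2 * W t.1.1 t.1.2 t.2.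

(* [cond_info m a b c] is I(a;b|c,U) for the pmf p(u,x1,x2) = m u x1 x2.  The
   components [m u] are kept unnormalized, which makes every summand homogeneous of
   degree one in [m u]. *)
Definition cond_info (U A B C : finType) (m : U -> X1 -> X2 -> R)
    (a : X1 * X2 * Y -> A) (b : X1 * X2 * Y -> B) (c : X1 * X2 * Y -> C) : R :=
  rsum (fun u => cmi (mac_dist (m u)) a b c).

Definition mac_info (M : X1 -> X2 -> R) : R :=
  cmi (mac_dist M) (fun t => t.1) (fun t => t.2) (fun _ => tt).

Definition objective (U : finType) (C1 C2 : R) (m : U -> X1 -> X2 -> R) : R :=
  let I12 := cond_info m (fun t => t.1.1) (fun t => t.1.2) (fun _ => tt) in
  let I1y := cond_info m (fun t => t.1.1) (fun t => t.2) (fun t => t.1.2) in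
  let I2y := cond_info m (fun t => t.1.2) (fun t => t.2) (fun t => t.1.1) in
  let I12y := cond_info m (fun t => t.1) (fun t => t.2) (fun _ => tt) in
  Rmin (C1 + C2 - I12) (Rmin (C2 + I1y) (Rmin (C1 + I2y)
    (Rmin ((C1 + C2 + I12y - I12) / 2) (mac_info (marg m))))).

Section JointDistribution.
Variables (U : finType) (p : U -> X1 -> X2 -> R).

Definition drop_u (t : U * X1 * X2 * Y) : X1 * X2 * Y := (t.1.1.2, t.1.2, t.2).

Lemma rsum_joint (F : U * X1 * X2 * Y -> R) :
  rsum F = rsum (fun u => rsum (fun x : X1 * X2 * Y => F (u, x.1.1, x.1.2, x.2))).
Proof. by rewrite !pair_rsum; apply: eq_rsum => u; rewrite !pair_rsum. Qed.

Lemma push_joint s : push (joint p W) drop_u s = mac_dist (marg p) s.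
Proof.
rewrite /push rsum_joint exchange_rsum -[mac_dist _ s](rsum_pred1 s).
apply: eq_rsum => -[[x1 x2] y] /=; case: eqP => _; last exact: rsum_eq0.
by rewrite /mac_dist /marg -rsum_distrl.
Qed.

Lemma push_restr_joint u0 s :
  push (restr (joint p W) (fun t => t.1.1.1) u0) drop_u s = mac_dist (p u0) s.
Proof.
rewrite /push /restr rsum_joint -(rsum_pred1 u0 (fun u => mac_dist (p u) s)).
apply: eq_rsum => u /=; case: eqP => _; last by apply: rsum_eq0 => x; case: eqP.
by rewrite -[mac_dist _ s](rsum_pred1 s); apply: eq_rsum => -[[x1 x2] y].
Qed.

Lemma cmi_joint (A B C : finType) (a : X1 * X2 * Y -> A) (b : _ -> B) (c : _ -> C) :
  cmi (joint p W) (fun t => a (drop_u t)) (fun t => b (drop_u t)) (fun t => c (drop_u t)) =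
  cmi (mac_dist (marg p)) a b c.
Proof.
rewrite cmi_comp; congr cmi.
by apply: functional_extensionality => s; apply: push_joint.
Qed.

Lemma cmi_joint_cond (A B C : finType) (a : X1 * X2 * Y -> A) (b : _ -> B) (c : _ -> C) :
  cmi (joint p W) (fun t => a (drop_u t)) (fun t => b (drop_u t))
      (fun t => (c (drop_u t), t.1.1.1)) = cond_info p a b c.
Proof.
rewrite cmi_pair_cond; apply: eq_rsum => u0; rewrite cmi_comp; congr cmi.
by apply: functional_extensionality => s; apply: push_restr_joint.
Qed.

Lemma cmi_joint_cond_u (A B : finType) (a : X1 * X2 * Y -> A) (b : _ -> B) :
  cmi (joint p W) (fun t => a (drop_u t)) (fun t => b (drop_u t)) (fun t => t.1.1.1) =
  cond_info p a b (fun _ => tt).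
Proof.
rewrite -(cmi_cond_inj _ _ _ _ (f := pair tt)); last by move=> ? ? [].
exact: cmi_joint_cond.
Qed.

Lemma objective_eq C1 C2 : fl_objective W p C1 C2 = objective C1 C2 p.
Proof.
rewrite /fl_objective /objective /=.
congr (Rmin (_ - _) (Rmin (_ + _) (Rmin (_ + _) (Rmin ((_ + _ - _) / 2) _)))).
- exact: (cmi_joint_cond_u (fun s => s.1.1) (fun s => s.1.2)).
- exact: (cmi_joint_cond (fun s => s.1.1) (fun s => s.2) (fun s => s.1.2)).
- exact: (cmi_joint_cond (fun s => s.1.2) (fun s => s.2) (fun s => s.1.1)).
- exact: (cmi_joint_cond_u (fun s => s.1) (fun s => s.2)).
- exact: (cmi_joint_cond_u (fun s => s.1.1) (fun s => s.1.2)).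
- exact: (cmi_joint (fun s => s.1) (fun s => s.2) (fun _ => tt)).
Qed.

End JointDistribution.

Hypothesis HW : is_channel W.

Definition out (M : X1 -> X2 -> R) (y : Y) : R := expect M (fun x => W x.1 x.2 y).

Definition neg_cond_ent (M : X1 -> X2 -> R) : R :=
  expect M (fun x => rsum (fun y => nlogn (W x.1 x.2 y))).

Lemma mac_dist_ge0 M : nonneg M -> forall t, 0 <= mac_dist M t.
Proof. by move=> M_ge0 t; apply: Rmult_le_pos; [apply: M_ge0 | apply: HW.1]. Qed.

Lemma cmi_mac_dist_scale (A B C : finType)
    (a : X1 * X2 * Y -> A) (b : _ -> B) (c : _ -> C) k M :
  nonneg M -> 0 <= k -> cmi (mac_dist (scale k M)) a b c = k * cmi (mac_dist M) a b c.
Proof.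
move=> M_ge0 k_ge0; rewrite -cmiZ //; last exact: mac_dist_ge0.
by congr cmi; apply: functional_extensionality => t; rewrite /mac_dist /scale Rmult_assoc.
Qed.

Lemma rsum_out M : rsum (out M) = mass M.
Proof.
rewrite /out /expect exchange_rsum; apply: eq_rsum => x.
by rewrite rsum_distrr HW.2.
Qed.

Lemma mac_infoE M : nonneg M ->
  mac_info M = neg_cond_ent M - rsum (fun y => nlogn (out M y)) + nlogn (mass M).
Proof.
move=> M_ge0; set P := mac_dist M.
have ent_unit (S : finType) (g : X1 * X2 * Y -> S) : ent P (fun t => (g t, tt)) = ent P g.
  by apply: (ent_comp_inj P g (f := fun s => (s, tt))) => ? ? [].
have ent_X : ent P (fun t => t.1) = - rsum (fun x : X1 * X2 => nlogn (M x.1 x.2)).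
  rewrite entE; congr (- _); apply: eq_rsum => x; congr nlogn; rewrite /push pair_rsum.
  transitivity (rsum (fun x' => if x' == x then rsum (fun y => P (x', y)) else 0)).
    by apply: eq_rsum => x'; case: eqP => _ //; rewrite rsum_eq0.
  by rewrite rsum_pred1 /P /mac_dist /= rsum_distrr HW.2 Rmult_1_r.
have ent_Y : ent P (fun t => t.2) = - rsum (fun y => nlogn (out M y)).
  rewrite entE; congr (- _); apply: eq_rsum => y; congr nlogn; rewrite /push pair_rsum.
  by apply: eq_rsum => x; rewrite rsum_pred1.
have ent_XY : ent P (fun t => (t.1, t.2)) =
    - (neg_cond_ent M + rsum (fun x : X1 * X2 => nlogn (M x.1 x.2))).
  rewrite entE pair_rsum /neg_cond_ent /expect -rsumD; congr (- _); apply: eq_rsum => x.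
  transitivity (rsum (fun y => nlogn (M x.1 x.2 * W x.1 x.2 y))).
    apply: eq_rsum => y; congr nlogn; transitivity (P (x, y)) => //.
    by rewrite /push -(rsum_pred1 (x, y) P); apply: eq_rsum => -[].
  under eq_rsum => y do rewrite (nlognM (M_ge0 _ _) (HW.1 _ _ _)).
  by rewrite rsumD rsum_distrr rsum_distrl HW.2 Rmult_1_l.
have ent_0 : ent P (fun _ => tt) = - nlogn (mass M).
  rewrite entE rsum_unit /push; congr (- nlogn _).
  by rewrite -rsum_out /out /expect pair_rsum exchange_rsum.
rewrite /mac_info /cmi -/P !ent_unit ent_X ent_Y ent_XY ent_0; ring.
Qed.

Lemma out_ge0 M y : nonneg M -> 0 <= out M y.
Proof. by move=> M_ge0; apply: expect_ge0 => // x; apply: HW.1. Qed.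

Lemma mac_info_concave l M1 M2 : 0 <= l <= 1 -> nonneg M1 -> nonneg M2 ->
  mass M1 = 1 -> mass M2 = 1 ->
  l * mac_info M1 + (1 - l) * mac_info M2 <=
  mac_info (fun x1 x2 => l * M1 x1 x2 + (1 - l) * M2 x1 x2).
Proof.
move=> l01 M1_ge0 M2_ge0 M1_mass M2_mass.
have M_ge0 : nonneg (fun x1 x2 => l * M1 x1 x2 + (1 - l) * M2 x1 x2).
  by move=> x1 x2; have := M1_ge0 x1 x2; have := M2_ge0 x1 x2; nra.
have mass_comb : mass (fun x1 x2 => l * M1 x1 x2 + (1 - l) * M2 x1 x2) = 1.
  by rewrite /mass expect_comb -/(mass M1) -/(mass M2) M1_mass M2_mass; ring.
rewrite !mac_infoE // mass_comb M1_mass M2_mass nlogn1 /neg_cond_ent expect_comb.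
under [X in _ <= _ - X + _]eq_rsum => y do rewrite /out expect_comb.
suff : rsum (fun y => nlogn (l * out M1 y + (1 - l) * out M2 y)) <=
       l * rsum (fun y => nlogn (out M1 y)) + (1 - l) * rsum (fun y => nlogn (out M2 y)).
  by rewrite /out; lra.
rewrite -!rsum_distrr -rsumD; apply: ler_rsum => y.
by apply: nlogn_convex => //; apply: out_ge0.
Qed.

Lemma neg_cond_ent_le0 M : nonneg M -> neg_cond_ent M <= 0.
Proof.
move=> M_ge0; rewrite /neg_cond_ent /expect -(rsum_eq0 (fun _ : X1 * X2 => erefl 0)).
apply: ler_rsum => x; rewrite -(Rmult_0_r (M x.1 x.2)).
apply: Rmult_le_compat_l; first exact: M_ge0.
rewrite -(rsum_eq0 (fun _ : Y => erefl 0)); apply: ler_rsum => y; apply: nlogn_le0.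
split; first exact: HW.1.
by rewrite -(HW.2 x.1 x.2); apply: rsum_ge_term => y'; apply: HW.1.
Qed.

Lemma mac_info_le M : nonneg M -> mass M = 1 -> mac_info M <= rsum (fun _ : Y => / ln 2).
Proof.
move=> M_ge0 M_mass; rewrite mac_infoE // M_mass nlogn1.
have := neg_cond_ent_le0 M_ge0.
suff : - rsum (fun y => nlogn (out M y)) <= rsum (fun _ : Y => / ln 2) by lra.
rewrite -rsumN; apply: ler_rsum => y.
by have := nlogn_ge (out_ge0 y M_ge0); lra.
Qed.

Lemma objective_le_mac_info (U : finType) C1 C2 (m : U -> X1 -> X2 -> R) :
  objective C1 C2 m <= mac_info (marg m).
Proof. by rewrite /objective; do 4 apply: Rle_trans (Rmin_r _ _) _; apply: Rle_refl. Qed.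

Lemma cond_info_mix (A B C : finType) (a : X1 * X2 * Y -> A) (b : _ -> B) (c : _ -> C)
    k1 k2 l (p : 'I_k1 -> X1 -> X2 -> R) (q : 'I_k2 -> X1 -> X2 -> R) :
  0 <= l <= 1 -> (forall j, nonneg (p j)) -> (forall j, nonneg (q j)) ->
  cond_info (mix l p q) a b c = l * cond_info p a b c + (1 - l) * cond_info q a b c.
Proof.
move=> l01 p_ge0 q_ge0.
rewrite /cond_info (rsum_mix l p q (fun M => cmi (mac_dist M) a b c)) -!rsum_distrr.
by congr (_ + _); apply: eq_rsum => j; apply: cmi_mac_dist_scale => //; lra.
Qed.

Lemma objective_mix C1 C2 D1 D2 k1 k2 l
    (p : 'I_k1 -> X1 -> X2 -> R) (q : 'I_k2 -> X1 -> X2 -> R) :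
  0 <= l <= 1 -> is_pmf3 p -> is_pmf3 q ->
  l * objective C1 C2 p + (1 - l) * objective D1 D2 q <=
  objective (l * C1 + (1 - l) * D1) (l * C2 + (1 - l) * D2) (mix l p q).
Proof.
move=> l01 /is_pmf3E[p_ge0 p_mass] /is_pmf3E[q_ge0 q_mass].
rewrite /objective /= marg_mix !cond_info_mix //.
do 4 (apply: Rle_trans (Rmin_comb _ _ _ _ l01) _;
      apply: Rmin_le_compat; first by apply: Req_le; field).
by apply: mac_info_concave; rewrite ?mass_marg //; apply: marg_nonneg.
Qed.

Section Caratheodory.
Variable n : nat.
Implicit Types (m : 'I_n -> X1 -> X2 -> R) (d : 'I_n -> R).

(* What a Caratheodory step must leave unchanged: the first three information terms
   of every component, and the data from which [mac_infoE] computes I(X1X2;Y) of the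
   marginal. *)
Definition mac_stat M (e : option (option (option (option Y)))) : R :=
  match e with
  | None => cmi (mac_dist M) (fun t => t.1.1) (fun t => t.1.2) (fun _ => tt)
  | Some None => cmi (mac_dist M) (fun t => t.1.1) (fun t => t.2) (fun t => t.1.2)
  | Some (Some None) => cmi (mac_dist M) (fun t => t.1.2) (fun t => t.2) (fun t => t.1.1)
  | Some (Some (Some None)) => neg_cond_ent M
  | Some (Some (Some (Some y))) => out M y
  end.

Definition caratheodory_dir m d : Prop :=
  (exists i, d i <> 0) /\ forall e, dot d (fun i => mac_stat (m i) e) = 0.

Lemma caratheodory_dirN m d : caratheodory_dir m d -> caratheodory_dir m (fun i => - d i).
Proof.
move=> [[i di_neq0] d_orth]; split; first by exists i; lra.
by move=> e; rewrite dotN d_orth; ring.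
Qed.

Lemma caratheodory_dir_Y m : (#|Y| + 4 < n)%N -> exists d, caratheodory_dir m d.
Proof. by move=> n_gt; apply: kernel_exists; rewrite !card_option -addn4. Qed.

Lemma dot_expect m d g :
  dot d (fun i => expect (m i) g) = expect (fun x1 x2 => dot d (fun i => m i x1 x2)) g.
Proof. by rewrite /dot; under eq_rsum => i do rewrite -expect_scale; rewrite -expect_marg. Qed.

Lemma caratheodory_dir_X m : (#|X1| * #|X2| + 3 < n)%N -> exists d, caratheodory_dir m d.
Proof.
move=> n_gt.
pose c i (e : option (option (option (X1 * X2)))) : R :=
  match e with
  | None => mac_stat (m i) None
  | Some None => mac_stat (m i) (Some None)
  | Some (Some None) => mac_stat (m i) (Some (Some None))
  | Some (Some (Some x)) => m i x.1 x.2
  end.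
have [|d [d_neq0 d_orth]] := @kernel_exists n _ c.
  by rewrite !card_option card_prod -addn3.
(* Annihilating the masses [m i x1 x2] annihilates all expectations. *)
have expect_orth g : dot d (fun i => expect (m i) g) = 0.
  by rewrite dot_expect; apply: rsum_eq0 => x; rewrite (d_orth (Some (Some (Some x)))) Rmult_0_l.
exists d; split => // -[[[[y|]|]|]|]; try exact: expect_orth.
- exact: (d_orth (Some (Some None))).
- exact: (d_orth (Some None)).
- exact: (d_orth None).
Qed.

Lemma dot_mass m d : caratheodory_dir m d -> dot d (fun i => mass (m i)) = 0.
Proof.
move=> [_ d_orth].
have -> : (fun i => mass (m i)) = fun i => rsum (out (m i)).
  by apply: functional_extensionality => i; rewrite rsum_out.
rewrite dot_exchange; apply: rsum_eq0 => y.
exact: (d_orth (Some (Some (Some (Some y))))).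
Qed.

Lemma expect_marg_reweight t m d g :
  expect (marg (fun i => scale (1 + t * d i) (m i))) g =
  expect (marg m) g + t * dot d (fun i => expect (m i) g).
Proof.
by rewrite !expect_marg; under eq_rsum => i do rewrite expect_scale; apply: rsum_reweight.
Qed.

Lemma cond_info_reweight (A B C : finType)
    (a : X1 * X2 * Y -> A) (b : _ -> B) (c : _ -> C) t m d :
  (forall i, nonneg (m i)) -> (forall i, 0 <= 1 + t * d i) ->
  cond_info (fun i => scale (1 + t * d i) (m i)) a b c =
  cond_info m a b c + t * dot d (fun i => cmi (mac_dist (m i)) a b c).
Proof.
move=> m_ge0 w_ge0; rewrite /cond_info.
by under eq_rsum => i do rewrite cmi_mac_dist_scale //; apply: rsum_reweight.
Qed.

Lemma objective_mono (U : finType) C1 C2 (m m' : U -> X1 -> X2 -> R) :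
  cond_info m' (fun s => s.1.1) (fun s => s.1.2) (fun _ => tt) =
    cond_info m (fun s => s.1.1) (fun s => s.1.2) (fun _ => tt) ->
  cond_info m' (fun s => s.1.1) (fun s => s.2) (fun s => s.1.2) =
    cond_info m (fun s => s.1.1) (fun s => s.2) (fun s => s.1.2) ->
  cond_info m' (fun s => s.1.2) (fun s => s.2) (fun s => s.1.1) =
    cond_info m (fun s => s.1.2) (fun s => s.2) (fun s => s.1.1) ->
  cond_info m (fun s => s.1) (fun s => s.2) (fun _ => tt) <=
    cond_info m' (fun s => s.1) (fun s => s.2) (fun _ => tt) ->
  mac_info (marg m') = mac_info (marg m) ->
  objective C1 C2 m <= objective C1 C2 m'.
Proof.
rewrite /objective /= => -> -> -> I12y_le ->.
by do 4 (apply: Rmin_le_compat; first lra); apply: Rle_refl.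
Qed.

Lemma objective_reweight C1 C2 t m d :
  (forall i, nonneg (m i)) -> caratheodory_dir m d -> 0 <= t -> (forall i, 0 <= 1 + t * d i) ->
  0 <= dot d (fun i => cmi (mac_dist (m i)) (fun s => s.1) (fun s => s.2) (fun _ => tt)) ->
  objective C1 C2 m <= objective C1 C2 (fun i => scale (1 + t * d i) (m i)).
Proof.
move=> m_ge0 [_ d_orth] t_ge0 w_ge0 gain.
apply: objective_mono; rewrite ?cond_info_reweight //.
- by rewrite (d_orth None) Rmult_0_r Rplus_0_r.
- by rewrite (d_orth (Some None)) Rmult_0_r Rplus_0_r.
- by rewrite (d_orth (Some (Some None))) Rmult_0_r Rplus_0_r.
- by rewrite -{1}(Rplus_0_r (cond_info _ _ _ _)); exact/Rplus_le_compat_l/Rmult_le_pos.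
have out_eq : out (marg (fun i => scale (1 + t * d i) (m i))) = out (marg m).
  apply: functional_extensionality => y.
  by rewrite /out expect_marg_reweight (d_orth (Some (Some (Some (Some y))))) Rmult_0_r Rplus_0_r.
have nce_eq : neg_cond_ent (marg (fun i => scale (1 + t * d i) (m i))) = neg_cond_ent (marg m).
  rewrite /neg_cond_ent expect_marg_reweight (d_orth (Some (Some (Some None)))).
  by rewrite Rmult_0_r Rplus_0_r.
have m'_ge0 i : nonneg (scale (1 + t * d i) (m i)) by apply: scale_nonneg.
rewrite !mac_infoE; [|exact: marg_nonneg..].
by rewrite -!rsum_out out_eq nce_eq.
Qed.

End Caratheodory.

Lemma cmi_mac_dist_null (A B C : finType)
    (a : X1 * X2 * Y -> A) (b : _ -> B) (c : _ -> C) M :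
  (forall x1 x2, M x1 x2 = 0) -> cmi (mac_dist M) a b c = 0.
Proof.
move=> M0; have -> : M = scale 0 M.
  by apply: functional_extensionality => x1; apply: functional_extensionality => x2;
     rewrite /scale M0 Rmult_0_l.
by rewrite cmi_mac_dist_scale ?Rmult_0_l // => [x1 x2|]; rewrite ?M0; apply: Rle_refl.
Qed.

Lemma objective_drop C1 C2 n (m : 'I_n.+1 -> X1 -> X2 -> R) i0 :
  (forall x1 x2, m i0 x1 x2 = 0) ->
  objective C1 C2 (fun j => m (lift i0 j)) = objective C1 C2 m.
Proof.
move=> m0.
have cond_drop (A B C : finType) (a : X1 * X2 * Y -> A) (b : _ -> B) (c : _ -> C) :
    cond_info m a b c = cond_info (fun j => m (lift i0 j)) a b c.
  by rewrite /cond_info (rsum_D1_ord _ i0) cmi_mac_dist_null // Rplus_0_l.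
have marg_drop : marg m = marg (fun j => m (lift i0 j)).
  apply: functional_extensionality => x1; apply: functional_extensionality => x2.
  by rewrite /marg (rsum_D1_ord _ i0) m0 Rplus_0_l.
by rewrite /objective !cond_drop marg_drop.
Qed.

Lemma card_reduction_along C1 C2 n (m : 'I_n.+1 -> X1 -> X2 -> R) d :
  is_pmf3 m -> (forall i, 0 < mass (m i)) -> caratheodory_dir m d ->
  0 <= dot d (fun i => cmi (mac_dist (m i)) (fun s => s.1) (fun s => s.2) (fun _ => tt)) ->
  exists m' : 'I_n -> X1 -> X2 -> R, is_pmf3 m' /\ objective C1 C2 m <= objective C1 C2 m'.
Proof.
move=> m_pmf mass_gt0 d_dir gain; have /is_pmf3E[m_ge0 m_mass] := m_pmf.
have [i1 di1_lt0] := dot_eq0_neg d_dir.1 mass_gt0 (dot_mass d_dir).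
have [t [i0 [t_ge0 w_ge0 wi0]]] := zeroing_weight di1_lt0.
have m'_pmf : is_pmf3 (fun i => scale (1 + t * d i) (m i)).
  apply/is_pmf3E; split => [i|]; first exact: scale_nonneg.
  under eq_rsum => j do rewrite /mass expect_scale.
  by rewrite rsum_reweight -/(dot d (fun j => mass (m j))) dot_mass // m_mass; ring.
exists (fun j => scale (1 + t * d (lift i0 j)) (m (lift i0 j))); split.
  by apply: (pmf3_drop _ m'_pmf) => x1 x2; rewrite /scale wi0 Rmult_0_l.
rewrite (objective_drop _ _ (m := fun i => scale (1 + t * d i) (m i)) (i0 := i0)).
  exact: objective_reweight.
by move=> x1 x2; rewrite /scale wi0 Rmult_0_l.
Qed.

Lemma card_reduction_step C1 C2 n (m : 'I_n.+1 -> X1 -> X2 -> R) :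
  (minn (#|X1| * #|X2| + 3) (#|Y| + 4) < n.+1)%N -> is_pmf3 m ->
  exists m' : 'I_n -> X1 -> X2 -> R, is_pmf3 m' /\ objective C1 C2 m <= objective C1 C2 m'.
Proof.
move=> n_gt m_pmf; have /is_pmf3E[m_ge0 _] := m_pmf.
have [[i0 /(mass_eq0 (m_ge0 i0)) m0]|no_null] := classic (exists i0, mass (m i0) = 0).
  exists (fun j => m (lift i0 j)); split; first exact: pmf3_drop.
  by rewrite objective_drop //; apply: Rle_refl.
have mass_gt0 i : 0 < mass (m i).
  have := expect_ge0 (m_ge0 i) (fun _ => Rle_0_1); rewrite -/(mass _) => mass_ge0.
  by case: (Rle_lt_or_eq_dec _ _ mass_ge0) => // mass0; case: no_null; exists i.
have [d d_dir] : exists d, caratheodory_dir m d.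
  by move: n_gt; rewrite gtn_min => /orP[]; [apply: caratheodory_dir_X | apply: caratheodory_dir_Y].
have [gain|loss] := Rle_lt_dec 0 (dot d (fun i =>
  cmi (mac_dist (m i)) (fun s => s.1) (fun s => s.2) (fun _ => tt))).
  exact: (card_reduction_along C1 C2 m_pmf mass_gt0 d_dir gain).
by apply: (card_reduction_along _ _ m_pmf mass_gt0 (caratheodory_dirN d_dir)); rewrite dotN; lra.
Qed.

Lemma card_reduction C1 C2 n (m : 'I_n -> X1 -> X2 -> R) : is_pmf3 m ->
  exists k, (k <= minn (#|X1| * #|X2| + 3) (#|Y| + 4))%N /\
  exists m' : 'I_k -> X1 -> X2 -> R, is_pmf3 m' /\ objective C1 C2 m <= objective C1 C2 m'.
Proof.
elim: n m => [|n IH] m m_pmf.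
  by exists 0%N; split => //; exists m; split => //; apply: Rle_refl.
have [n_le|n_gt] := leqP n.+1 (minn (#|X1| * #|X2| + 3) (#|Y| + 4)).
  by exists n.+1; split => //; exists m; split => //; apply: Rle_refl.
have [m1 [m1_pmf le1]] := card_reduction_step C1 C2 n_gt m_pmf.
have [k [k_le [m' [m'_pmf le2]]]] := IH m1 m1_pmf.
by exists k; split => //; exists m'; split => //; lra.
Qed.

End MAC.

Lemma lub_approx (E : R -> Prop) l eps : is_lub E l -> 0 < eps -> exists v, E v /\ l - eps < v.
Proof.
move=> [_ l_least] eps_gt0; apply: NNPP => no_v.
have : is_upper_bound E (l - eps).
  by move=> v Ev; apply: Rnot_lt_le => lt_v; apply: no_v; exists v.
by move/l_least; lra.
Qed.

Lemma lub_comb (E1 E2 E3 : R -> Prop) s1 s2 s3 l : 0 <= l <= 1 ->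
  is_lub E1 s1 -> is_lub E2 s2 -> is_lub E3 s3 ->
  (forall v1 v2, E1 v1 -> E2 v2 -> exists2 v, E3 v & l * v1 + (1 - l) * v2 <= v) ->
  l * s1 + (1 - l) * s2 <= s3.
Proof.
move=> l01 lub1 lub2 [ub3 _] comb; apply: Rle_plus_epsilon => eps eps_gt0.
have [v1 [E1v1 v1_gt]] := lub_approx lub1 eps_gt0.
have [v2 [E2v2 v2_gt]] := lub_approx lub2 eps_gt0.
have [v E3v le_v] := comb _ _ E1v1 E2v2.
by have := ub3 _ E3v; nra.
Qed.

Section Sup.
Variables (X1 X2 Y : finType) (W : X1 -> X2 -> Y -> R).
Hypothesis HW : is_channel W.

Lemma fl_valuesE C1 C2 v : fl_values W C1 C2 v <->
  exists k, (k <= minn (#|X1| * #|X2| + 3) (#|Y| + 4))%N /\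
  exists m : 'I_k -> X1 -> X2 -> R, is_pmf3 m /\ v = objective W C1 C2 m.
Proof.
by split=> -[k [k_le [m [m_pmf ->]]]]; exists k; split => //; exists m; rewrite objective_eq.
Qed.

Lemma f_l_lub C1 C2 : (exists v, fl_values W C1 C2 v) -> is_lub (fl_values W C1 C2) (f_l W C1 C2).
Proof.
move=> values_ne; apply: epsilon_spec.
have [|s s_lub] := completeness (fl_values W C1 C2) _ values_ne; last by exists s.
exists (rsum (fun _ : Y => / ln 2)) => v /fl_valuesE[k [_ [m [/is_pmf3E[m_ge0 m_mass] ->]]]].
apply: Rle_trans (objective_le_mac_info _ _ _ _) _.
by apply: mac_info_le; rewrite ?mass_marg //; apply: marg_nonneg.
Qed.

Lemma fl_values_mix C1 C2 D1 D2 l v1 v2 : 0 <= l <= 1 ->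
  fl_values W C1 C2 v1 -> fl_values W D1 D2 v2 ->
  exists2 v, fl_values W (l * C1 + (1 - l) * D1) (l * C2 + (1 - l) * D2) v &
             l * v1 + (1 - l) * v2 <= v.
Proof.
move=> l01 /fl_valuesE[k1 [_ [p [p_pmf ->]]]] /fl_valuesE[k2 [_ [q [q_pmf ->]]]].
have [k [k_le [m [m_pmf mix_le]]]] :=
  card_reduction HW (l * C1 + (1 - l) * D1) (l * C2 + (1 - l) * D2) (mix_pmf3 l01 p_pmf q_pmf).
exists (objective W (l * C1 + (1 - l) * D1) (l * C2 + (1 - l) * D2) m).
  by apply/fl_valuesE; exists k; split => //; exists m.
exact: Rle_trans (objective_mix HW _ _ _ _ l01 p_pmf q_pmf) mix_le.
Qed.

End Sup.

Unset Implicit Arguments.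

Theorem proposition1 (X1 X2 Y : finType) (W : X1 -> X2 -> Y -> R)
    (HW : is_channel W) (C1 C2 D1 D2 lam : R) :
  0 <= C1 -> 0 <= C2 -> 0 <= D1 -> 0 <= D2 -> 0 <= lam <= 1 ->
  lam * f_l W C1 C2 + (1 - lam) * f_l W D1 D2
    <= f_l W (lam * C1 + (1 - lam) * D1) (lam * C2 + (1 - lam) * D2).
Proof.
move=> _ _ _ _ lam01.
have [[k [k_le [p p_pmf]]]|no_pmf] := classic (exists k,
  (k <= minn (#|X1| * #|X2| + 3) (#|Y| + 4))%N /\ exists p : 'I_k -> X1 -> X2 -> R, is_pmf3 p).
  have values_ne A B : exists v, fl_values W A B v.
    by exists (fl_objective W p A B); exists k; split => //; exists p.
  apply: (lub_comb lam01 (f_l_lub HW (values_ne _ _)) (f_l_lub HW (values_ne _ _))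
                   (f_l_lub HW (values_ne _ _))).
  by move=> v1 v2; apply: fl_values_mix.
(* Without admissible pmfs (e.g. an empty input alphabet) all three values are the
   same junk supremum of the empty set. *)
have f_l_const A B : f_l W A B = Rsup (fun _ => False).
  congr Rsup; apply: functional_extensionality => v; apply: propositional_extensionality.
  by split=> // -[k [k_le [p [p_pmf _]]]]; apply: no_pmf; exists k; split => //; exists p.
by rewrite !f_l_const; lra.
Qed.
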